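(* For every $r \geqslant 4$ there exists $C(r) > 0$ such that the following holds. If $n \in \mathbb{N}$ and $p > 0$ satisfy $p\, n^{1/\lambda(r)} \log n \leqslant 1/(2\mathrm{e})$, and $n$ is sufficiently large, then $$\mathbb{E}\big(Y_m(uv)\big) \,\leqslant\, \left(\frac{m + C(r)}{2\binom{r}{2}\log n}\right)^{m - \lambda(r)}$$ for every edge $uv \in E(K_n)$ and every $m$ with $\lambda(r) + 1 \leqslant m \leqslant \binom{r}{2}\log n$.
   Context: $\lambda(r) = \frac{\binom{r}{2}-2}{r-2}$ and $\mathrm{e}$ is Euler's number. $G_{n,p}$ is the Erdős–Rényi random graph on $[n]$. For $m \in \mathbb{N}$ and $uv \in E(K_n)$, $Y_m(uv)$ is the number of subgraphs $F \subset G_{n,p}$ whose vertex set contains $u$ and $v$ and which satisfy $e(F) = m \geqslant \lambda(r)\big(v(F)-2\big) + 1$. *)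

From HB Require Import structures.
From mathcomp Require Import all_boot all_order all_algebra.
From mathcomp Require Import all_classical all_reals all_analysis.
Set Implicit Arguments. Unset Strict Implicit. Unset Printing Implicit Defensive.
Import Order.TTheory GRing.Theory Num.Theory.
Local Open Scope ring_scope.

Definition lambda (R : realType) (r : nat) : R :=
  (('C(r, 2))%:R - 2) / (r%:R - 2).

Definition KnE (n : nat) : {set {set 'I_n}} := [set e : {set 'I_n} | #|e| == 2%N].

(* A graph on 'I_n is a set of edges G \subset KnE n.  The Erdos-Renyi
   measure: P(G_{n,p} = G) = p^{e(G)} (1-p)^{binom(n,2) - e(G)}. *)
Definition gnp_prob (R : realType) (n : nat) (p : R) (G : {set {set 'I_n}}) : R :=
  p ^+ #|G| * (1 - p) ^+ (#|KnE n| - #|G|).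

Definition gnp_expect (R : realType) (n : nat) (p : R)
    (X : {set {set 'I_n}} -> R) : R :=
  \sum_(G : {set {set 'I_n}} | G \subset KnE n) gnp_prob p G * X G.

Definition Ym (R : realType) (r n m : nat) (u v : 'I_n) (G : {set {set 'I_n}}) : nat :=
  #|[set F : {set 'I_n} * {set {set 'I_n}} |
      [&& u \in F.1, v \in F.1, F.2 \subset G,
          [forall e in F.2, e \subset F.1], #|F.2| == m
        & (lambda R r * ((#|F.1|)%:R - 2) + 1 <= (m%:R : R))]]|.

From HB Require Import structures.
From mathcomp Require Import all_boot all_order all_algebra.
From mathcomp Require Import all_classical all_reals all_analysis.
From mathcomp Require Import lra ring zify.
Import Order.TTheory GRing.Theory Num.Theory.
Local Open Scope ring_scope.

(* By linearity of expectation, E Y_m(uv) is p^m times the number of pairs (V, E) with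
   {u, v} ⊆ V, E an m-set of pairs inside V and λ(|V| - 2) + 1 <= m.  For a fixed V there
   are at most (e C(|V|,2) / m)^m such E, and admissibility together with C(r,2) <= 2 λ^2
   gives C(r,2) C(|V|,2) <= m (m + 2 C(r,2)).  With q = n^(1/λ), the hypothesis on p reads
   p <= (2 e q log n)^-1, and λ(|V| - 2) <= m - 1 gives q^(m-1) >= n^(|V|-2); so V contributes
   at most base^m n^-(|V|-2) / q, where base = (m + 2 C(r,2)) / (2 C(r,2) log n).  Summing
   n^-(|V|-2) over all V ⊇ {u, v} gives (1 + 1/n)^(n-2) <= e <= q, and base <= 1 lets the
   exponent drop from m to m - λ. *)

Lemma sum_subset_binomial (R : comPzSemiRingType) (T : finType) (S : {set T}) (a b : R) :
  \sum_(H : {set T} | H \subset S) a ^+ #|H| * b ^+ (#|S| - #|H|) = (a + b) ^+ #|S|.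
Proof.
pose F i := if i \in S then a else 0.
pose G i := if i \in S then b else 1.
have := @bigA_distr R 0 1 *%R +%R T F G.
have -> : \prod_i (F i + G i) = (a + b) ^+ #|S|.
  rewrite -prodr_const [RHS]big_mkcond /=; apply: eq_bigr => i _.
  by rewrite /F /G; case: (i \in S); rewrite ?add0r.
move=> ->; rewrite [LHS]big_mkcond /=; apply: eq_bigr => H _.
have [HS | /subsetPn[i iH iS]] := boolP (H \subset S); last first.
  by rewrite (bigD1 i) //= iH /F (negbTE iS) mul0r.
rewrite (bigID (mem H)) /=.
rewrite (eq_bigr (fun=> a)) => [|i iH]; last by rewrite iH /F (fintype.subsetP HS i iH).
rewrite prodr_const (eq_bigr G) => [|i /negbTE->] //.
rewrite -big_mkcondr prodr_const.
have -> : (#|S| - #|H| = #|S :\: H|)%N by rewrite cardsD (finset.setIidPr HS).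
by congr (_ * _); congr (_ ^+ _); apply: eq_card => i; rewrite finset.in_setD.
Qed.

Lemma sum_bernoulli_supsets {R : comPzRingType} {T : finType} {K E : {set T}} (p : R) :
  E \subset K ->
  \sum_(G : {set T} | (G \subset K) && (E \subset G)) p ^+ #|G| * (1 - p) ^+ (#|K| - #|G|)
  = p ^+ #|E|.
Proof.
move=> EK.
rewrite (reindex_onto (fun H => E :|: H) (fun G => G :\: E)); last first.
  move=> G /andP[_ EG]; apply/setP => y; rewrite !inE.
  by case yE: (y \in E); rewrite ?(fintype.subsetP EG y yE).
transitivity (p ^+ #|E| * \sum_(H : {set T} | H \subset K :\: E)
                p ^+ #|H| * (1 - p) ^+ (#|K :\: E| - #|H|)); last first.
  by rewrite sum_subset_binomial addrC subrK expr1n mulr1.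
rewrite mulr_sumr; apply: eq_big => H.
  rewrite finset.subsetD finset.subUset EK finset.subsetUl /= finset.setDUl.
  rewrite finset.setDv finset.set0U andbT.
  by congr (_ && _); apply/eqP/idP => /finset.setDidPl.
move=> /andP[_ /eqP]; rewrite finset.setDUl finset.setDv finset.set0U => /finset.setDidPl dHE.
rewrite cardsU (finset.disjoint_setI0 _) 1?disjoint_sym // finset.cards0 subn0.
by rewrite cardsDS // exprD -mulrA subnDA.
Qed.

Lemma gnp_expect_card_contained (R : realType) (n : nat) (p : R) (T : finType)
    (A : {set T}) (f : T -> {set {set 'I_n}}) :
  (forall x, x \in A -> f x \subset KnE n) ->
  gnp_expect p (fun G => (#|[set x in A | f x \subset G]|)%:R)
  = \sum_(x in A) p ^+ #|f x|.
Proof.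
move=> fK; rewrite /gnp_expect.
transitivity (\sum_(G : {set {set 'I_n}} | G \subset KnE n) \sum_(x in A)
                gnp_prob p G * ((f x \subset G) : nat)%:R).
  apply: eq_bigr => G _; rewrite -mulr_sumr -natr_sum -sum1_card.
  congr (_ * _%:R); rewrite big_mkcond [RHS]big_mkcond /=; apply: eq_bigr => x _.
  by rewrite finset.in_set; case: (x \in A); case: (f x \subset G).
rewrite exchange_big /=; apply: eq_bigr => x xA.
rewrite -(sum_bernoulli_supsets p (fK x xA)) big_mkcondr /=; apply: eq_bigr => G _.
by rewrite /gnp_prob; case: (f x \subset G); rewrite ?mulr1 ?mulr0.
Qed.

Definition edge_sets_within {n : nat} (m : nat) (V : {set 'I_n}) : {set {set {set 'I_n}}} :=
  [set E : {set {set 'I_n}} | [&& E \subset KnE n, [forall e in E, e \subset V] & #|E| == m]].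

Lemma card_edge_sets_within (n m : nat) (V : {set 'I_n}) :
  #|edge_sets_within m V| = 'C('C(#|V|, 2), m).
Proof.
rewrite -cards_draws -cards_draws; apply: eq_card => E; rewrite !finset.in_set.
apply/idP/idP.
- case/and3P=> /fintype.subsetP EK /forall_inP EV ->; rewrite andbT.
  apply/fintype.subsetP => e eE; rewrite finset.in_set EV //=.
  by move: (EK e eE); rewrite finset.in_set.
- case/andP=> /fintype.subsetP EV2 ->; rewrite andbT; apply/andP; split.
  + by apply/fintype.subsetP => e /EV2; rewrite !finset.in_set => /andP[].
  + by apply/forall_inP => e /EV2; rewrite finset.in_set => /andP[].
Qed.

Definition admissible_subgraphs (R : realType) (r : nat) {n : nat} (m : nat) (u v : 'I_n) :
  {set {set 'I_n} * {set {set 'I_n}}} :=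
  [set F : {set 'I_n} * {set {set 'I_n}} |
     [&& u \in F.1, v \in F.1 & lambda R r * (#|F.1|%:R - 2) + 1 <= m%:R]
     && (F.2 \in edge_sets_within m F.1)].

Lemma gnp_expect_Ym (R : realType) (r n m : nat) (u v : 'I_n) (p : R) :
  gnp_expect p (fun G => (Ym R r m u v G)%:R)
  = #|admissible_subgraphs R r m u v|%:R * p ^+ m.
Proof.
rewrite mulr_natl -sumr_const.
transitivity (\sum_(F in admissible_subgraphs R r m u v) p ^+ #|F.2|); last first.
  by apply: eq_bigr => F; rewrite !finset.in_set => /andP[_ /and3P[_ _ /eqP->]].
rewrite -gnp_expect_card_contained => [|F]; last first.
  by rewrite !finset.in_set => /andP[_ /and3P[]].
apply: eq_bigr => G GK; congr (_ * _%:R); apply: eq_card => F; rewrite !finset.in_set.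
case FG: (F.2 \subset G); last by rewrite andbF; case: (u \in F.1); case: (v \in F.1).
rewrite (fintype.subset_trans FG GK) andbT.
by case: (u \in F.1); case: (v \in F.1); case: [forall e in F.2, e \subset F.1];
  case: (#|F.2| == m); rewrite ?andbT ?andbF.
Qed.

Lemma card_admissible_subgraphs (R : realType) (r n m : nat) (u v : 'I_n) :
  #|admissible_subgraphs R r m u v|
  = (\sum_(V : {set 'I_n} | [&& u \in V, v \in V & (lambda R r * (#|V|%:R - 2) + 1 <= m%:R)%R])
       'C('C(#|V|, 2), m))%N.
Proof.
under [RHS]eq_bigr => V _ do rewrite -card_edge_sets_within -sum1_card.
by rewrite pair_big_dep -sum1_card; apply: eq_bigl => F; rewrite finset.in_set.
Qed.

Lemma sum_supsets_pair {R : comPzSemiRingType} {n : nat} {u v : 'I_n} (x : R) : u != v ->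
  \sum_(V : {set 'I_n} | (u \in V) && (v \in V)) x ^+ (#|V| - 2) = (1 + x) ^+ (n - 2).
Proof.
move=> uv; pose P := [set u; v].
rewrite (reindex_onto (fun W => P :|: W) (fun V => V :\: P)); last first.
  move=> V /andP[uV vV]; have PV : P \subset V by rewrite finset.subUset !finset.sub1set uV vV.
  by rewrite -{1}(finset.setIidPr PV) finset.setID.
have cardPC : #|~: P| = (n - 2)%N.
  by have := cardsC P; rewrite cards2 uv card_ord /=; lia.
have [uP vP] : u \in P /\ v \in P by rewrite !finset.in_set2 !eqxx orbT.
have cardP : #|P| = 2%N by rewrite cards2 uv.
clearbody P.
have filterE W :
    (u \in P :|: W) && (v \in P :|: W) && ((P :|: W) :\: P == W) = [disjoint W & P].
  rewrite !finset.in_setU uP vP finset.setDUl finset.setDv finset.set0U.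
  exact: sameP eqP finset.setDidPl.
rewrite -cardPC addrC -sum_subset_binomial; apply: eq_big => W.
  by rewrite filterE finset.disjoints_subset.
rewrite filterE => dWP; rewrite expr1n mulr1 cardsU.
by rewrite finset.disjoint_setI0 1?disjoint_sym // finset.cards0 subn0 cardP addKn.
Qed.

Lemma gnp_expect_Ym_le_of_term_bound (R : realType) (r n m : nat) (u v : 'I_n) (p D x : R) :
  0 <= D -> 0 <= x -> u != v ->
  (forall k : nat, (2 <= k)%N -> lambda R r * (k%:R - 2) + 1 <= m%:R ->
     'C('C(k, 2), m)%:R * p ^+ m <= D * x ^+ (k - 2)) ->
  gnp_expect p (fun G => (Ym R r m u v G)%:R) <= D * (1 + x) ^+ (n - 2).
Proof.
move=> D0 x0 uv hk.
rewrite gnp_expect_Ym card_admissible_subgraphs natr_sum mulr_suml.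
rewrite -(sum_supsets_pair x uv) mulr_sumr big_mkcond [X in _ <= X]big_mkcond /=.
apply: ler_sum => V _; case: ifP => [/and3P[uV vV adm] | _].
  rewrite uV vV; apply: hk adm.
  have uvV : [set u; v] \subset V by rewrite finset.subUset !finset.sub1set uV vV.
  by have := subset_leq_card uvV; rewrite cards2 uv.
by case: ifP => _ //; rewrite mulr_ge0 ?exprn_ge0.
Qed.

Lemma ffact_leq_expn N m : (N ^_ m <= N ^ m)%N.
Proof.
elim: m => [|m IH]; first by rewrite ffactn0 expn0.
by rewrite ffactnSr expnSr leq_mul // leq_subr.
Qed.

(* [m^m / m! <= e^m] is one term of the exponential series at [m]. *)
Lemma bin_le_expR (R : realType) N m : (0 < m)%N ->
  'C(N, m)%:R <= (expR 1 * N%:R / m%:R : R) ^+ m.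
Proof.
case: m => // m _.
have m0 : (0 : R) < m.+1%:R by rewrite ltr0n.
have fact0 : (0 : R) < (m.+1`!)%:R by rewrite ltr0n fact_gt0.
have powm_fact : (m.+1%:R : R) ^+ m.+1 / (m.+1`!)%:R <= expR 1 ^+ m.+1.
  have := @expR_ge1Dxn R m.+1%:R m (ler0n _ _).
  by rewrite -[X in expR X]mulr1 expRM_natl; apply: le_trans; rewrite lerDr.
have binN : 'C(N, m.+1)%:R <= (N%:R : R) ^+ m.+1 / (m.+1`!)%:R.
  by rewrite ler_pdivlMr // -natrM bin_ffact -natrX ler_nat ffact_leq_expn.
apply: le_trans binN _.
rewrite expr_div_n exprMn mulrAC [X in _ <= X]mulrC ler_wpM2l ?exprn_ge0 ?ler0n //.
by rewrite ler_pdivlMr ?exprn_gt0 // mulrC.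
Qed.

Lemma bin2_mul2 k : ('C(k, 2) * 2 = k * k.-1)%N.
Proof.
elim: k => // k IH; rewrite binS bin1 mulnDl IH.
by case: k {IH} => //= k; lia.
Qed.

Lemma natr_bin2 (R : pzRingType) k : 'C(k, 2)%:R * 2 = k%:R * (k%:R - 1) :> R.
Proof.
case: k => [|k]; first by rewrite bin0n !mul0r.
by rewrite -[2]/(2%:R) -natrM bin2_mul2 natrM -natr1 addrK.
Qed.

Lemma lambda_mulE (R : realType) r : (2 < r)%N ->
  lambda R r * (r%:R - 2) = 'C(r, 2)%:R - 2.
Proof. by move=> r2; rewrite divfK // subr_eq0 eqr_nat gtn_eqF. Qed.

Lemma lambda_ge2 (R : realType) r : (4 <= r)%N -> 2 <= lambda R r.
Proof.
move=> r4; have r_ge4 : (4 : R) <= r%:R by rewrite (ler_nat R 4 r).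
have r2 : (0 : R) < r%:R - 2 by lra.
rewrite -(ler_pM2r r2) lambda_mulE ?(ltnW r4) //.
have := natr_bin2 R r; nra.
Qed.

Lemma bin2_le_lambda_sq (R : realType) r : (4 <= r)%N -> 'C(r, 2)%:R <= 2 * lambda R r ^+ 2.
Proof.
move=> r4; have r_ge4 : (4 : R) <= r%:R by rewrite (ler_nat R 4 r).
have r2 : (0 : R) < r%:R - 2 by lra.
rewrite -(ler_pM2r (exprn_gt0 2 r2)) -mulrA -exprMn lambda_mulE ?(ltnW r4) //.
have : 0 <= r%:R * (r%:R - 1) * (r%:R - 4) :> R by rewrite !mulr_ge0 //; lra.
have := natr_bin2 R r; nra.
Qed.

(* With [x = s - 2]: [B x^2 <= 2 l^2 x^2 <= 2 (m - 1)^2] and [2 x <= l x <= m - 1]. *)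
Lemma admissible_bin2_le {R : realFieldType} {B l m s : R} :
  2 <= l -> B <= 2 * l ^+ 2 -> 0 <= B -> 2 <= s -> l * (s - 2) + 1 <= m ->
  B * (s * (s - 1) / 2) <= m * (m + 2 * B).
Proof.
move=> l2 Bl B0 s2; set x := s - 2 => hm.
have x0 : 0 <= x by rewrite /x; lra.
have lx0 : 0 <= l * x by nra.
have lx_sq : (l * x) ^+ 2 <= (m - 1) ^+ 2 by rewrite ler_sqr ?nnegrE; lra.
have Bx_sq : B * x ^+ 2 <= 2 * (m - 1) ^+ 2.
  have : B * x ^+ 2 <= 2 * l ^+ 2 * x ^+ 2 by rewrite ler_wpM2r // exprn_ge0.
  by rewrite exprMn in lx_sq; lra.
have Bx : B * (2 * x) <= B * (m - 1) by rewrite ler_wpM2l //; nra.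
have Bm : B * (m - 1) <= B * m by rewrite ler_wpM2l //; lra.
have m_sq : (m - 1) ^+ 2 <= m ^+ 2 by rewrite ler_sqr ?nnegrE; lra.
have -> : s = x + 2 by rewrite /x; lra.
rewrite !expr2 in Bx_sq m_sq; nra.
Qed.

Lemma card_edge_sets_admissible_le (R : realType) r k m :
  (4 <= r)%N -> (2 <= k)%N -> (0 < m)%N -> lambda R r * (k%:R - 2) + 1 <= m%:R ->
  'C('C(k, 2), m)%:R <= (expR 1 * (m%:R + 2 * 'C(r, 2)%:R) / 'C(r, 2)%:R) ^+ m :> R.
Proof.
move=> r4 k2 m0 adm; apply: le_trans (bin_le_expR R _ _ m0) _.
have B0 : (0 : R) < 'C(r, 2)%:R by rewrite ltr0n bin_gt0 (leq_trans _ r4).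
have mR0 : (0 : R) < m%:R by rewrite ltr0n.
have e0 : (0 : R) < expR 1 by exact: expR_gt0.
apply: lerXn2r; rewrite ?nnegrE ?divr_ge0 ?mulr_ge0 ?addr_ge0 ?ler0n ?(ltW e0) ?(ltW B0) //.
rewrite -!mulrA ler_pM2l // ler_pdivrMr // mulrAC ler_pdivlMr //.
rewrite -[X in X * _](mulfK (_ : 2 != 0)) ?pnatr_eq0 // natr_bin2 mulrC [X in _ <= X]mulrC.
apply: (admissible_bin2_le (lambda_ge2 R r r4) (bin2_le_lambda_sq R r r4) (ltW B0)) adm.
by rewrite (ler_nat R 2 k).
Qed.

Lemma exprn_le_powR (R : realType) (N s : R) (i j : nat) :
  1 <= N -> j%:R <= s * i%:R -> N ^+ j <= N `^ s ^+ i.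
Proof.
move=> N1 ji; have N0 : 0 <= N by apply: le_trans N1.
by rewrite -powR_mulrn // -powR_mulrn ?powR_ge0 // -powRrM; apply: ler_powR.
Qed.

Lemma exprn_le_div (R : realFieldType) (p a q N : R) (m j : nat) :
  (0 < m)%N -> 0 <= p -> p <= a / q -> 0 < q -> 0 < N -> N ^+ j <= q ^+ m.-1 ->
  p ^+ m <= a ^+ m / q * (N ^+ j)^-1.
Proof.
move=> m0 p0 pa q0 N0 Nq.
have aq0 : 0 <= a / q := le_trans p0 pa.
have a0 : 0 <= a by move: aq0; rewrite pmulr_lge0 ?invr_gt0.
have : p ^+ m <= (a / q) ^+ m by apply: lerXn2r; rewrite ?nnegrE.
move/le_trans; apply; rewrite expr_div_n -mulrA -invfM ler_wpM2l ?exprn_ge0 //.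
by rewrite lef_pV2 ?posrE ?mulr_gt0 ?exprn_gt0 // -(prednK m0) exprS ler_pM2l.
Qed.

Lemma exprn_1Dinv_le_expR (R : realType) (n k : nat) : (k <= n)%N ->
  (1 + n%:R^-1) ^+ k <= expR 1 :> R.
Proof.
move=> kn; have x0 : (0 : R) <= n%:R^-1 by rewrite invr_ge0.
apply: (@le_trans _ _ (expR n%:R^-1 ^+ k)).
  by apply: lerXn2r; rewrite ?nnegrE ?expR_ge0 ?expR_ge1Dx ?addr_ge0.
rewrite -expRM_natl ler_expR.
have [->|n0] := posnP n; first by rewrite invr0 mulr0.
by rewrite ler_pdivrMr ?ltr0n // mul1r ler_nat.
Qed.

Lemma exprn_le_powR_le1 (R : realType) (b s : R) m :
  0 < b <= 1 -> s <= m%:R -> b ^+ m <= b `^ s.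
Proof.
move=> b01 sm; have /andP[b0 _] := b01.
by rewrite -powR_mulrn ?(ltW b0) //; exact: ger_powR b01 _ _ sm.
Qed.

Section GnpExpectYmBound.
Variables (R : realType) (r : nat).
Hypothesis r4 : (4 <= r)%N.
Let l := lambda R r.
Let B : R := 'C(r, 2)%:R.

Lemma vertex_set_contribution_le (n : nat) (p L : R) (k m : nat) :
  1 <= n%:R :> R -> 0 < L -> 0 < p -> p * powR n%:R (1 / l) * L <= 1 / (2 * expR 1) ->
  (2 <= k)%N -> (0 < m)%N -> l * (k%:R - 2) + 1 <= m%:R ->
  'C('C(k, 2), m)%:R * p ^+ m
  <= (expR 1 * (m%:R + 2 * B) / B) ^+ m
     * ((2 * expR 1 * L)^-1 ^+ m / powR n%:R (1 / l) * n%:R^-1 ^+ (k - 2)).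
Proof.
move=> n1 L0 p0 hp k2 m0 adm.
have l2 : 2 <= l := lambda_ge2 R r r4.
have q0 : 0 < powR n%:R (1 / l) by rewrite powR_gt0 // (lt_le_trans ltr01).
apply: ler_pM; rewrite ?ler0n ?exprn_ge0 ?(ltW p0) //.
  exact: card_edge_sets_admissible_le.
rewrite [n%:R^-1 ^+ _]exprVn; apply: exprn_le_div; rewrite ?(ltW p0) ?(lt_le_trans ltr01 n1) //.
  by rewrite (ler_pdivlMr _ _ q0) [X in _ <= X]invfM (ler_pdivlMr _ _ L0) -[X in _ <= X]div1r.
apply: exprn_le_powR => //; rewrite -subn1 !natrB // mul1r (ler_pdivlMl _ _ (_ : 0 < l)); lra.
Qed.

Lemma gnp_expect_Ym_le_powR (n : nat) (p : R) (u v : 'I_n) (m : nat) :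
  expR (l + 2) <= n%:R -> 0 < p ->
  p * powR n%:R (1 / l) * ln n%:R <= 1 / (2 * expR 1) -> u != v ->
  l + 1 <= m%:R -> m%:R <= B * ln n%:R ->
  gnp_expect p (fun G => (Ym R r m u v G)%:R)
  <= powR ((m%:R + 2 * B) / (2 * B * ln n%:R)) (m%:R - l).
Proof.
move=> hn p0 hp uv hm hmL.
have l2 : 2 <= l := lambda_ge2 R r r4.
have B0 : 0 < B by rewrite ltr0n bin_gt0 (leq_trans _ r4).
have e0 : (0 : R) < expR 1 := expR_gt0 1.
have n0 : (0 : R) < n%:R by apply: lt_le_trans hn; exact: expR_gt0.
have n1 : (1 : R) <= n%:R.
  by apply: le_trans hn; rewrite -[X in X <= _]expR0 ler_expR; lra.
have m0 : (0 < m)%N by rewrite -(ltr_nat R); lra.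
set L := ln n%:R in hp hmL *; set q := powR n%:R (1 / l) in hp *.
have hL : l + 2 <= L by rewrite /L -[l + 2]expRK ler_ln ?posrE ?expR_gt0.
have L0 : 0 < L by lra.
have e_le_q : expR 1 <= q.
  by rewrite /q /powR gt_eqF // ler_expR -/L mul1r ler_pdivlMl ?mulr1; lra.
set base := (m%:R + 2 * B) / (2 * B * L).
have base_gt0 : 0 < base by rewrite divr_gt0 ?mulr_gt0 //; lra.
have base_le1 : base <= 1 by rewrite ler_pdivrMr ?mulr_gt0 // mul1r; nra.
set D := (expR 1 * (m%:R + 2 * B) / B) ^+ m.
set c := (2 * expR 1 * L)^-1 ^+ m / q.
have Dc : D * c = base ^+ m / q.
  rewrite /D /c mulrA -exprMn; congr (_ ^+ _ / _); rewrite /base; field.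
  by rewrite !gt_eqF.
apply: le_trans (@gnp_expect_Ym_le_of_term_bound R r n m u v p (D * c) n%:R^-1 _ _ uv _) _.
- by rewrite Dc divr_ge0 ?exprn_ge0 ?(ltW base_gt0) ?(ltW (lt_le_trans e0 e_le_q)).
- by rewrite invr_ge0 (ltW n0).
- move=> k k2 adm; rewrite -mulrA.
  exact: (vertex_set_contribution_le _ _ _ _ _ n1 L0 p0 hp k2 m0 adm).
rewrite Dc -mulrA; apply: le_trans (_ : base ^+ m <= _); last first.
  by apply: exprn_le_powR_le1; rewrite ?base_gt0 //; lra.
rewrite -[X in _ <= X]mulr1 ler_wpM2l ?exprn_ge0 ?(ltW base_gt0) //.
rewrite ler_pdivrMl ?(lt_le_trans e0) // mulr1; apply: le_trans e_le_q.
exact: exprn_1Dinv_le_expR (leq_subr _ _).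
Qed.
End GnpExpectYmBound.

Theorem lemma3p8 (R : realType) (r : nat) (hr : (4 <= r)%N) :
  exists C : R, 0 < C /\
  exists n0 : nat, forall (n : nat) (p : R),
    (n0 <= n)%N -> 0 < p ->
    p * powR (n%:R) (1 / lambda R r) * ln (n%:R) <= 1 / (2 * expR 1) ->
    forall (u v : 'I_n), u != v ->
    forall m : nat,
      lambda R r + 1 <= m%:R -> (m%:R : R) <= ('C(r, 2))%:R * ln (n%:R) ->
      @gnp_expect R n p (fun G => ((Ym R r m u v G)%:R : R))
        <= powR ((m%:R + C) / (2 * ('C(r, 2))%:R * ln (n%:R))) (m%:R - lambda R r).
Proof.
exists (2 * 'C(r, 2)%:R); split; first by rewrite mulr_gt0 // ltr0n bin_gt0 (leq_trans _ hr).
exists (Num.truncn (expR (lambda R r + 2))).+1 => n p n0_le_n p0 hp u v uv m hm hmL.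
apply: (@gnp_expect_Ym_le_powR R r hr) => //.
by apply: ltW (lt_le_trans (truncnS_gt _) _); rewrite ler_nat.
Qed.
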